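(* Let $n\ge3$ and let $f$ be a $\gamma_{tr3}(P_3\square P_n)$-function such that the number of vertices $v$ with $f(v)=\emptyset$ is minimum among all $\gamma_{tr3}(P_3\square P_n)$-functions. Then $|f((2,j))|\in\{0,1\}$ for every $j\in\{0,1,\dots,n-1\}$.
   Context: $P_m$ denotes the directed path with vertex set $\{0,1,\dots,m-1\}$ and arcs $(i,i+1)$ for $0\le i\le m-2$. The Cartesian product $D_1\square D_2$ has vertex set $V(D_1)\times V(D_2)$, with an arc from $(x_1,y_1)$ to $(x_2,y_2)$ iff either $(x_1,x_2)$ is an arc of $D_1$ and $y_1=y_2$, or $x_1=x_2$ and $(y_1,y_2)$ is an arc of $D_2$. For a digraph $D$ and positive integer $k$, a $k$-rainbow dominating function on $D$ is $f:V(D)\to\mathcal P(\{1,\dots,k\})$ such that every $v$ with $f(v)=\emptyset$ satisfies $\bigcup_{u\in N^-(v)}f(u)=\{1,\dots,k\}$, where $N^-(v)$ is the set of in-neighbors of $v$; its weight is $\sum_v|f(v)|$. It is total if additionally the subdigraph induced by $\{v:f(v)\ne\emptyset\}$ has no isolated vertex (a vertex with neither in- nor out-neighbors in it). $\gamma_{trk}(D)$ is the minimum weight of a total $k$-rainbow dominating function, and a $\gamma_{trk}(D)$-function is one attaining it. *)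

From mathcomp Require Import all_boot.
Set Implicit Arguments. Unset Strict Implicit. Unset Printing Implicit Defensive.

Definition path_arc (m : nat) : rel 'I_m := fun i j => j == i.+1 :> nat.

Definition cart_arc (A B : finType) (a : rel A) (b : rel B) : rel (A * B) :=
  fun x y => (a x.1 y.1 && (x.2 == y.2)) || ((x.1 == y.1) && b x.2 y.2).

Definition grid_arc (m n : nat) : rel ('I_m * 'I_n) :=
  cart_arc (@path_arc m) (@path_arc n).

(* k-rainbow dominating function on a digraph (V, arc): in-neighbours u of v
   are those with arc u v. *)
Definition is_rdf (V : finType) (arc : rel V) (k : nat) (f : V -> {set 'I_k}) :=
  forall v, f v = set0 -> \bigcup_(u | arc u v) f u = [set: 'I_k].

(* total: the subdigraph induced by {v | f v <> empty} has no isolated vertex *)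
Definition is_trdf (V : finType) (arc : rel V) (k : nat) (f : V -> {set 'I_k}) :=
  is_rdf arc f /\
  forall v, f v != set0 -> exists u, (f u != set0) && (arc u v || arc v u).

Definition rweight (V : finType) (k : nat) (f : V -> {set 'I_k}) : nat :=
  \sum_(v : V) #|f v|.

Definition is_gamma_trk_fun (V : finType) (arc : rel V) (k : nat)
  (f : V -> {set 'I_k}) :=
  is_trdf arc f /\ forall g : V -> {set 'I_k}, is_trdf arc g -> rweight f <= rweight g.

Definition n_empty (V : finType) (k : nat) (f : V -> {set 'I_k}) : nat :=
  #|[set v | f v == set0]|.

From mathcomp Require Import all_boot.
Set Implicit Arguments. Unset Strict Implicit. Unset Printing Implicit Defensive.

(** Let [v] carry at least two colours and have at most one out-neighbour.
    If every out-neighbour of [v] is non-empty, no vertex relies on the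
    colours of [v] for domination, so [v] may keep a single colour: the
    weight drops, contradicting minimality.  Otherwise the unique
    out-neighbour [w] is empty; moving all but one colour of [v] onto [w]
    keeps a total rainbow dominating function of the same weight (only [w]
    is dominated by [v], and [v], [w] now dominate each other) with one
    empty vertex fewer.  In [P_3 □ P_n] the vertices [(2, j)] of the last
    row have at most one out-neighbour, namely [(2, j+1)]. *)

Section OutUniqueVertex.
Variables (V : finType) (arc : rel V) (k : nat).

Lemma trdf_shrink (f : V -> {set 'I_k}) v (S : {set 'I_k}) :
  is_trdf arc f -> f v != set0 -> S != set0 ->
  (forall x, arc v x -> f x != set0) ->
  is_trdf arc (fun x => if x == v then S else f x).
Proof.
move=> [dom tot] fv0 S0 out_nonempty; split=> x /=.
  case: (eqVneq x v) => [->|_] fx0; first by move: S0; rewrite fx0 eqxx.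
  rewrite -(dom x fx0); apply: eq_bigr => u vx; case: (eqVneq u v) => // uv.
  by move: (out_nonempty x); rewrite -uv vx fx0 eqxx => /(_ isT).
move=> fx0; have {}fx0 : f x != set0 by case: (eqVneq x v) fx0 => [->|].
have [u /andP[fu ux]] := tot x fx0.
by exists u; rewrite ux andbT; case: (eqVneq u v).
Qed.

Lemma rweight_shrink (f : V -> {set 'I_k}) v (S : {set 'I_k}) :
  rweight (fun x => if x == v then S else f x) + #|f v| = rweight f + #|S|.
Proof.
rewrite /rweight (bigD1 v) //= [in RHS](bigD1 v) //= eqxx.
rewrite (eq_bigr (fun x => #|f x|)); last by move=> x /negbTE ->.
by rewrite addnAC [in RHS]addnAC [#|S| + _]addnC.
Qed.

Lemma trdf_transfer (f : V -> {set 'I_k}) v w (S T : {set 'I_k}) :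
  is_trdf arc f -> arc v w -> f w = set0 -> (forall x, arc v x -> x = w) ->
  S != set0 -> T != set0 -> w != v ->
  is_trdf arc (fun x => if x == v then S else if x == w then T else f x).
Proof.
move=> [dom tot] vw fw0 out_w S0 T0 wv; split=> x /=.
  case: (eqVneq x v) => [_ gx0|xv]; first by move: S0; rewrite gx0 eqxx.
  case: (eqVneq x w) => [_ gx0|xw fx0]; first by move: T0; rewrite gx0 eqxx.
  apply/eqP; rewrite eqEsubset subsetT /= -(dom x fx0).
  apply/bigcupsP => u ux; apply: subset_trans (bigcup_sup u ux).
  have -> : (u == v) = false.
    by apply/eqP=> uv; move/eqP: xw; apply; apply: out_w; rewrite -uv.
  by case: (eqVneq u w) => [->|_]; rewrite ?fw0 ?sub0set.
case: (eqVneq x v) => [-> _|xv]; first by exists w; rewrite (negbTE wv) eqxx T0 vw orbT.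
case: (eqVneq x w) => [-> _|xw fx0]; first by exists v; rewrite eqxx S0 vw.
have [u /andP[fu ux]] := tot x fx0.
by exists u; rewrite ux andbT; case: (eqVneq u v) => // _; case: (eqVneq u w).
Qed.

Lemma rweight_transfer (f : V -> {set 'I_k}) v w (S T : {set 'I_k}) :
  w != v -> f w = set0 -> #|S| + #|T| = #|f v| ->
  rweight (fun x => if x == v then S else if x == w then T else f x) = rweight f.
Proof.
move=> wv fw0 ST.
rewrite /rweight (bigD1 v) //= [in RHS](bigD1 v) //= eqxx.
rewrite (bigD1 w) //= [in RHS](bigD1 w) //= eqxx (negbTE wv) fw0 cards0.
rewrite (eq_bigr (fun x => #|f x|)); last by move=> x /andP[/negbTE -> /negbTE ->].
by rewrite addnA ST.
Qed.

Lemma n_empty_transfer (f : V -> {set 'I_k}) v w (S T : {set 'I_k}) :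
  S != set0 -> T != set0 -> f w = set0 ->
  n_empty (fun x => if x == v then S else if x == w then T else f x) < n_empty f.
Proof.
move=> S0 T0 fw0; apply: proper_card; apply/properP; split.
  apply/subsetP => x; rewrite !inE.
  by case: (eqVneq x v) => _; [rewrite (negbTE S0) | case: (x == w); rewrite ?(negbTE T0)].
exists w; first by rewrite inE fw0.
by rewrite inE; case: (w == v); rewrite ?eqxx ?(negbTE S0) ?(negbTE T0).
Qed.

Lemma card_le1_of_out_unique (f : V -> {set 'I_k}) v :
  is_gamma_trk_fun arc f ->
  (forall g : V -> {set 'I_k}, is_gamma_trk_fun arc g -> n_empty f <= n_empty g) ->
  (forall x y, arc v x -> arc v y -> x = y) ->
  #|f v| <= 1.
Proof.
move=> [trf minw] min_empty out_unique; rewrite leqNgt; apply/negP => fv_gt1.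
have fv0 : f v != set0 by rewrite -card_gt0 (ltn_trans _ fv_gt1).
have [a fva] := set0Pn _ fv0.
have a0 : [set a] != set0 by apply/set0Pn; exists a; rewrite inE.
case: (pickP [pred w | arc v w && (f w == set0)]) => [w /andP[vw /eqP fw0]|no_empty_out].
  have wv : w != v by apply: contraNneq fv0 => <-; rewrite fw0.
  have T0 : f v :\ a != set0.
    by rewrite -card_gt0 -ltnS -add1n; move: fv_gt1; rewrite (cardsD1 a) fva.
  have ST : #|[set a]| + #|f v :\ a| = #|f v| by rewrite [RHS](cardsD1 a) fva cards1.
  have out_w x : arc v x -> x = w by move/out_unique; apply.
  have trg := trdf_transfer trf vw fw0 out_w a0 T0 wv.
  have gamma_g : is_gamma_trk_fun arc
      (fun x => if x == v then [set a] else if x == w then f v :\ a else f x).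
    by split=> // h trh; rewrite rweight_transfer //; apply: minw.
  by move: (min_empty _ gamma_g); rewrite leqNgt n_empty_transfer.
have out_nonempty x : arc v x -> f x != set0.
  by move=> vx; move: (no_empty_out x) => /=; rewrite vx => /negbT.
have := minw _ (trdf_shrink trf fv0 a0 out_nonempty).
rewrite -(leq_add2r #|f v|) rweight_shrink cards1 leq_add2l.
by rewrite leqNgt fv_gt1.
Qed.

End OutUniqueVertex.

Lemma grid_arc_last_row_out_unique m n (j : 'I_n) (x y : 'I_m.+1 * 'I_n) :
  grid_arc (ord_max, j) x -> grid_arc (ord_max, j) y -> x = y.
Proof.
have out z : grid_arc (ord_max, j) z -> z.1 = ord_max /\ z.2 = j.+1 :> nat.
  case: z => z1 z2; rewrite /grid_arc /cart_arc /path_arc /=.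
  case/orP=> /andP[/eqP z1_max /eqP z2j]; last by rewrite z1_max.
  by move: (ltn_ord z1); rewrite z1_max ltnn.
case: x y => [x1 x2] [y1 y2] /out[/= -> x2j] /out[/= -> y2j].
by congr pair; apply: val_inj; rewrite /= x2j y2j.
Qed.

Theorem lemma4p6 (n : nat) (hn : 3 <= n) (f : 'I_3 * 'I_n -> {set 'I_3}) :
  is_gamma_trk_fun (@grid_arc 3 n) f ->
  (forall g : 'I_3 * 'I_n -> {set 'I_3},
      is_gamma_trk_fun (@grid_arc 3 n) g -> n_empty f <= n_empty g) ->
  forall j : 'I_n, #|f (inord 2, j)| <= 1.
Proof.
move=> gamma_f min_empty j.
have -> : inord 2 = ord_max :> 'I_3 by apply: val_inj; rewrite /= inordK.
apply: card_le1_of_out_unique gamma_f min_empty _.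
exact: grid_arc_last_row_out_unique.
Qed.
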